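(* Let $\alpha\in(1,3)$, $n=2$ and $\mu>0$, and consider the planar Maxwell-ring potential described in the context, in polar coordinates $u=re^{i\varphi}$. Then its critical points are exactly the $\mathbb{Z}_2$-orbits (orbits under $u\mapsto -u$) of: two saddle points $u=r_2$ and $u=r_1$ with $0<r_2<1<r_1$, and one minimum point $u=r_3e^{i\pi/2}$ with $r_3>1$; there are no other critical points.
   Context: Let $\zeta=\pi$, $\phi_\alpha'(r)=-r^{-\alpha}$, $s=2^{-\alpha}$ (i.e. $s=2^{-\alpha}\sum_{j=1}^{n-1}\sin^{-(\alpha-1)}(j\zeta/2)$ with $n=2$). The (rescaled) planar potential of a satellite attracted by two unit masses at $\pm1$ and a central mass $\mu$ at $0$ (identifying $\mathbb{R}^2=\mathbb{C}$) is $$V(u)=\frac12\|u\|^2+\sum_{j=1}^2\frac1{s+\mu}\phi_\alpha(\|u-e^{ij\pi}\|)+\frac{\mu}{s+\mu}\phi_\alpha(\|u\|).$$ *)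

From Stdlib Require Import Reals.
From Coquelicot Require Import Coquelicot.
Open Scope R_scope.

(* phi_alpha with phi_alpha'(r) = - r^(-alpha), r > 0, alpha > 1:
   phi_alpha(r) = r^(1-alpha)/(alpha-1) (additive constant irrelevant). *)
Definition phi (alpha r : R) : R := Rpower r (1 - alpha) / (alpha - 1).

(* s = 2^{-alpha} * sum_{j=1}^{n-1} sin^{-(alpha-1)}(j zeta/2) with n = 2, zeta = pi;
   sin(pi/2) = 1 so s = 2^{-alpha}. *)
Definition s_const (alpha : R) : R := Rpower 2 (- alpha).

Definition dist2 (p q : R * R) : R :=
  sqrt ((fst p - fst q) ^ 2 + (snd p - snd q) ^ 2).

(* V(u) = |u|^2/2 + sum_{j=1,2} phi(|u - e^{i j pi}|)/(s+mu) + mu/(s+mu) phi(|u|);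
   e^{i pi} = -1, e^{2 i pi} = 1. *)
Definition V (alpha mu : R) (u : R * R) : R :=
  (fst u ^ 2 + snd u ^ 2) / 2
  + / (s_const alpha + mu) * phi alpha (dist2 u (-1, 0))
  + / (s_const alpha + mu) * phi alpha (dist2 u (1, 0))
  + mu / (s_const alpha + mu) * phi alpha (dist2 u (0, 0)).

Definition in_domain (u : R * R) : Prop :=
  u <> (0, 0) /\ u <> (1, 0) /\ u <> (-1, 0).

Definition critical_point (alpha mu : R) (u : R * R) : Prop :=
  in_domain u /\ filterdiff (V alpha mu) (locally u) (fun _ : R * R => 0).

Definition local_min_point (alpha mu : R) (u : R * R) : Prop :=
  exists eps : R, 0 < eps /\
    forall q : R * R, in_domain q -> dist2 q u < eps -> V alpha mu u <= V alpha mu q.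

Definition saddle_point (alpha mu : R) (u : R * R) : Prop :=
  critical_point alpha mu u /\
  forall eps : R, 0 < eps ->
    (exists q, in_domain q /\ dist2 q u < eps /\ V alpha mu q < V alpha mu u) /\
    (exists q, in_domain q /\ dist2 q u < eps /\ V alpha mu u < V alpha mu q).

From Stdlib Require Import Reals Lra Psatz.
From Coquelicot Require Import Coquelicot.
Open Scope R_scope.

(* [V] depends on [u] only through [|u|^2] and the squared distances [w] to the three masses,
   each through the convex decreasing function [psi w = phi (sqrt w)]. Its gradient is
   [radial_factor u * u] minus the difference of the pulls of the masses at [-1] and [1],
   along the real axis. Off the real axis a critical point therefore has [radial_factor = 0]
   and is equidistant from [-1] and [1]: it lies on the imaginary axis, where [radial_factor]
   increases with [|y|] and vanishes once, at [r3 > 1]. On the real axis the equation [Vx = 0]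
   is strictly increasing on [(0, 1)] and on [(1, +oo)], with one root in each by the
   intermediate value theorem. Convexity of [psi] gives
   [V q >= V p + radial_factor p * |q - p|^2 / 2] at every critical [p], so [(0, +-r3)] are
   global minima. On each side of the masses [V] is convex along the real axis, while
   [radial_factor < 0] at the real critical points, so [V] decreases vertically there: saddles. *)

Lemma Rpower_pos x p : 0 < Rpower x p.
Proof. apply exp_pos. Qed.

Lemma Rpower_sub1 x p : 0 < x -> Rpower x (p - 1) = Rpower x p / x.
Proof.
  intros Hx. unfold Rminus. rewrite Rpower_plus, Rpower_Ropp, Rpower_1 by exact Hx.
  reflexivity.
Qed.

Lemma Rpower_sqr t p : 0 < t -> Rpower (t ^ 2) p = Rpower t (2 * p).
Proof.
  intros Ht. replace (t ^ 2) with (Rpower t (INR 2)) by now apply Rpower_pow.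
  rewrite Rpower_mult. now replace (INR 2) with 2 by (simpl; ring).
Qed.

(* Convexity of [w |-> w ^ p] for [p <= 0], through [ln t <= t - 1] and [1 + x <= exp x]. *)
Lemma Rpower_tangent w0 w p : 0 < w0 -> 0 < w -> p <= 0 ->
  Rpower w0 p + p * Rpower w0 (p - 1) * (w - w0) <= Rpower w p.
Proof.
  intros Hw0 Hw Hp.
  assert (Ht : 0 < w / w0) by (apply Rdiv_lt_0_compat; assumption).
  assert (Hln : ln (w / w0) <= w / w0 - 1).
  { pose proof (exp_ineq1_le (ln (w / w0))) as E. rewrite exp_ln in E by exact Ht. lra. }
  assert (Hratio : 1 + p * (w / w0 - 1) <= Rpower (w / w0) p).
  { pose proof (exp_ineq1_le (p * ln (w / w0))). unfold Rpower. nra. }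
  replace w with (w0 * (w / w0)) at 2 by (field; lra).
  rewrite <- Rpower_mult_distr, Rpower_sub1 by assumption.
  pose proof (Rpower_pos w0 p).
  replace (Rpower w0 p + p * (Rpower w0 p / w0) * (w - w0))
    with (Rpower w0 p * (1 + p * (w / w0 - 1))) by (field; lra).
  apply Rmult_le_compat_l; lra.
Qed.

Lemma Rpower_lt_base_neg a b p : 0 < a < b -> p < 0 -> Rpower b p < Rpower a p.
Proof.
  intros [Ha Hab] Hp. unfold Rpower. apply exp_increasing.
  pose proof (ln_increasing a b Ha Hab). nra.
Qed.

Lemma Rpower_le_base_neg a b p : 0 < a <= b -> p <= 0 -> Rpower b p <= Rpower a p.
Proof.
  intros [Ha [Hab | <-]] Hp; [| lra].
  destruct (Req_dec p 0) as [-> | Hp0].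
  - rewrite !Rpower_O by lra. lra.
  - left. apply Rpower_lt_base_neg; lra.
Qed.

Lemma Rpower_neg_le_1 t p : 1 <= t -> p <= 0 -> Rpower t p <= 1.
Proof. intros Ht Hp. rewrite <- (Rpower_O t) by lra. apply Rle_Rpower; assumption. Qed.

Lemma inv_le_Rpower_neg t p : 1 <= p -> 0 < t <= 1 -> / t <= Rpower t (- p).
Proof.
  intros Hp Ht.
  replace (Rpower t (- p)) with (Rpower (/ t) p)
    by (unfold Rpower; rewrite ln_Rinv by lra; f_equal; ring).
  rewrite <- (Rpower_1 (/ t)) at 1 by (apply Rinv_0_lt_compat; lra).
  apply Rle_Rpower; [| exact Hp].
  rewrite <- Rinv_1. apply Rinv_le_contravar; lra.
Qed.

Lemma Rpower_neg_le_inv t p : 1 <= p -> 1 <= t -> Rpower t (- p) <= / t.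
Proof.
  intros Hp Ht. rewrite <- (Rpower_1 t) at 2 by lra. rewrite <- Rpower_Ropp.
  apply Rle_Rpower; lra.
Qed.

Definition psi (a w : R) : R := Rpower w ((1 - a) / 2) / (a - 1).
Definition kappa (a w : R) : R := Rpower w (- (a + 1) / 2).

Lemma phi_sqrt a w : 0 < w -> phi a (sqrt w) = psi a w.
Proof.
  intros Hw. unfold phi, psi. rewrite <- Rpower_sqrt, Rpower_mult by exact Hw.
  now replace (/ 2 * (1 - a)) with ((1 - a) / 2) by field.
Qed.

Lemma kappa_sqr a t : 0 < t -> t * kappa a (t ^ 2) = Rpower t (- a).
Proof.
  intros Ht. unfold kappa. rewrite Rpower_sqr by exact Ht.
  rewrite <- (Rpower_1 t) at 1 by exact Ht. rewrite <- Rpower_plus. f_equal. field.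
Qed.

Lemma is_derive_psi a w : 1 < a -> 0 < w -> is_derive (psi a) w (- (1 / 2) * kappa a w).
Proof.
  intros Ha Hw. unfold psi, kappa.
  apply is_derive_ext with (fun t => / (a - 1) * Rpower t ((1 - a) / 2)).
  { intros t. simpl. field. lra. }
  apply is_derive_Reals.
  replace (- (1 / 2) * Rpower w (- (a + 1) / 2))
    with (/ (a - 1) * ((1 - a) / 2 * Rpower w ((1 - a) / 2 - 1))).
  - apply derivable_pt_lim_scal, derivable_pt_lim_power, Hw.
  - replace ((1 - a) / 2 - 1) with (- (a + 1) / 2) by field. field. lra.
Qed.

Lemma is_derive_phi_sqrt a w : 1 < a -> 0 < w ->
  is_derive (fun t => phi a (sqrt t)) w (- (1 / 2) * kappa a w).
Proof.
  intros Ha Hw. apply is_derive_ext_loc with (psi a); [| apply is_derive_psi; assumption].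
  exists (mkposreal w Hw). intros t Ht. apply eq_sym, phi_sqrt.
  change (Rabs (t - w) < w) in Ht. apply Rabs_def2 in Ht. lra.
Qed.

Lemma psi_tangent a w0 w : 1 < a -> 0 < w0 -> 0 < w ->
  psi a w0 - 1 / 2 * kappa a w0 * (w - w0) <= psi a w.
Proof.
  intros Ha Hw0 Hw. unfold psi, kappa.
  pose proof (Rpower_tangent w0 w ((1 - a) / 2) Hw0 Hw ltac:(lra)) as T.
  replace ((1 - a) / 2 - 1) with (- (a + 1) / 2) in T by field.
  apply Rmult_le_reg_r with (a - 1); [lra |].
  replace ((Rpower w0 ((1 - a) / 2) / (a - 1) - 1 / 2 * Rpower w0 (- (a + 1) / 2) * (w - w0))
           * (a - 1))
    with (Rpower w0 ((1 - a) / 2) + (1 - a) / 2 * Rpower w0 (- (a + 1) / 2) * (w - w0))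
    by (field; lra).
  replace (Rpower w ((1 - a) / 2) / (a - 1) * (a - 1)) with (Rpower w ((1 - a) / 2))
    by (field; lra).
  exact T.
Qed.

Lemma kappa_tangent a w0 w : 1 < a -> 0 < w0 -> 0 < w ->
  kappa a w0 - (a + 1) / 2 * Rpower w0 (- (a + 3) / 2) * (w - w0) <= kappa a w.
Proof.
  intros Ha Hw0 Hw. unfold kappa.
  pose proof (Rpower_tangent w0 w (- (a + 1) / 2) Hw0 Hw ltac:(lra)) as T.
  replace (- (a + 1) / 2 - 1) with (- (a + 3) / 2) in T by field.
  replace (- (a + 1) / 2 * Rpower w0 (- (a + 3) / 2) * (w - w0))
    with (- ((a + 1) / 2 * Rpower w0 (- (a + 3) / 2) * (w - w0))) in T by field.
  lra.
Qed.

Lemma phi_tangent a d0 d : 1 < a -> 0 < d0 -> 0 < d ->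
  phi a d0 - Rpower d0 (- a) * (d - d0) <= phi a d.
Proof.
  intros Ha Hd0 Hd. unfold phi.
  pose proof (Rpower_tangent d0 d (1 - a) Hd0 Hd ltac:(lra)) as T.
  replace (1 - a - 1) with (- a) in T by ring.
  apply Rmult_le_reg_r with (a - 1); [lra |].
  replace ((Rpower d0 (1 - a) / (a - 1) - Rpower d0 (- a) * (d - d0)) * (a - 1))
    with (Rpower d0 (1 - a) + (1 - a) * Rpower d0 (- a) * (d - d0)) by (field; lra).
  replace (Rpower d (1 - a) / (a - 1) * (a - 1)) with (Rpower d (1 - a)) by (field; lra).
  exact T.
Qed.

Lemma kappa_lt a w1 w2 : 1 < a -> 0 < w1 < w2 -> kappa a w2 < kappa a w1.
Proof. intros Ha Hw. apply Rpower_lt_base_neg; lra. Qed.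

Lemma kappa_inj a w1 w2 : 1 < a -> 0 < w1 -> 0 < w2 -> kappa a w1 = kappa a w2 -> w1 = w2.
Proof.
  intros Ha H1 H2 E. destruct (Rtotal_order w1 w2) as [L | [L | L]]; [| exact L |].
  - pose proof (kappa_lt a w1 w2 Ha (conj H1 L)). lra.
  - pose proof (kappa_lt a w2 w1 Ha (conj H2 L)). lra.
Qed.

Lemma kappa_le_inv a w : 1 < a -> 1 <= w -> kappa a w <= / w.
Proof.
  intros Ha Hw. unfold kappa. replace (- (a + 1) / 2) with (- ((a + 1) / 2)) by field.
  apply Rpower_neg_le_inv; lra.
Qed.

Definition sqdist (u p : R * R) : R := (fst u - fst p) ^ 2 + (snd u - snd p) ^ 2.

Lemma sqdist_pos u p : u <> p -> 0 < sqdist u p.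
Proof.
  intros Hup. destruct u as [x y], p as [x' y']. unfold sqdist; cbn [fst snd].
  destruct (Req_dec x x') as [<- | Hx].
  - assert (Hy : y - y' <> 0) by (intros E; apply Hup; f_equal; lra).
    pose proof (Rsqr_pos_lt _ Hy). unfold Rsqr in *. nra.
  - assert (Hx' : x - x' <> 0) by (intros E; apply Hx; lra).
    pose proof (Rsqr_pos_lt _ Hx'). pose proof (pow2_ge_0 (y - y')). unfold Rsqr in *. nra.
Qed.

Lemma in_domain_iff u :
  in_domain u <-> 0 < sqdist u (-1, 0) /\ 0 < sqdist u (1, 0) /\ 0 < sqdist u (0, 0).
Proof.
  split.
  - intros (H0 & H1 & H2). repeat split; apply sqdist_pos; assumption.
  - intros (H0 & H1 & H2). repeat split; intros ->; unfold sqdist in *; cbn [fst snd] in *; lra.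
Qed.

Lemma in_domain_real x : x <> 0 -> x <> 1 -> x <> -1 -> in_domain (x, 0).
Proof. intros H0 H1 H2. repeat split; intros E; injection E; lra. Qed.

Lemma in_domain_imag y : y <> 0 -> in_domain (0, y).
Proof. intros Hy. repeat split; intros E; injection E; lra. Qed.

Definition coef (a m : R) : R := / (s_const a + m).

Lemma coef_pos a m : 0 < m -> 0 < coef a m.
Proof.
  intros Hm. apply Rinv_0_lt_compat. pose proof (Rpower_pos 2 (- a)). unfold s_const. lra.
Qed.

Lemma V_psi a m q : in_domain q ->
  V a m q = (fst q ^ 2 + snd q ^ 2) / 2 + coef a m * psi a (sqdist q (-1, 0))
    + coef a m * psi a (sqdist q (1, 0)) + m * coef a m * psi a (sqdist q (0, 0)).
Proof.
  rewrite in_domain_iff. intros (H1 & H2 & H0).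
  unfold V, dist2. fold (sqdist q (-1, 0)) (sqdist q (1, 0)) (sqdist q (0, 0)).
  rewrite !phi_sqrt by assumption. unfold coef, Rdiv. ring.
Qed.

Definition radial_factor (a m : R) (u : R * R) : R :=
  1 - coef a m * (kappa a (sqdist u (-1, 0)) + kappa a (sqdist u (1, 0))
                  + m * kappa a (sqdist u (0, 0))).

Definition Vx (a m : R) (u : R * R) : R :=
  fst u * radial_factor a m u
  - coef a m * (kappa a (sqdist u (-1, 0)) - kappa a (sqdist u (1, 0))).

Definition Vy (a m : R) (u : R * R) : R := snd u * radial_factor a m u.

Section Differential.

Variable u : R * R.

Lemma filterdiff_plus_R2 (f g lf lg : R * R -> R) :
  filterdiff f (locally u) lf -> filterdiff g (locally u) lg ->
  filterdiff (fun v => f v + g v) (locally u) (fun v => lf v + lg v).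
Proof. exact (filterdiff_plus_fct (F := locally u) f g lf lg). Qed.

Lemma filterdiff_scal_R2 (k : R) (f lf : R * R -> R) :
  filterdiff f (locally u) lf -> filterdiff (fun v => k * f v) (locally u) (fun v => k * lf v).
Proof. exact (filterdiff_scal_r_fct (F := locally u) k f lf Rmult_comm). Qed.

Lemma filterdiff_affine (L : R * R -> R) (k : R) :
  is_linear L -> filterdiff (fun v => L v + k) (locally u) L.
Proof.
  intros HL. apply filterdiff_ext_lin with (fun v => plus (L v) zero).
  - apply (filterdiff_plus_fct (F := locally u) L (fun _ => k));
      [apply filterdiff_linear, HL | apply (filterdiff_const (V := R_NormedModule))].
  - intros v. apply plus_zero_r.
Qed.

Lemma filterdiff_sqr (g l : R * R -> R) :
  filterdiff g (locally u) l -> filterdiff (fun v => g v ^ 2) (locally u) (fun v => 2 * g u * l v).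
Proof.
  intros H.
  apply (filterdiff_ext (fun v => mult (g v) (g v))); [intros v; unfold mult; simpl; ring |].
  eapply filterdiff_ext_lin.
  - exact (@filterdiff_mult_fct R_AbsRing _ g g u l l Rmult_comm H H).
  - intros v. unfold plus, mult; simpl. ring.
Qed.

Lemma filterdiff_sqdist p :
  filterdiff (fun v => sqdist v p) (locally u)
    (fun v => 2 * (fst u - fst p) * fst v + 2 * (snd u - snd p) * snd v).
Proof.
  apply filterdiff_plus_R2.
  - apply (filterdiff_sqr (fun v => fst v - fst p)), filterdiff_affine, is_linear_fst.
  - apply (filterdiff_sqr (fun v => snd v - snd p)), filterdiff_affine, is_linear_snd.
Qed.

Lemma filterdiff_phi_dist a p : 1 < a -> 0 < sqdist u p ->
  filterdiff (fun v => phi a (dist2 v p)) (locally u)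
    (fun v => - kappa a (sqdist u p) * ((fst u - fst p) * fst v + (snd u - snd p) * snd v)).
Proof.
  intros Ha Hp. eapply filterdiff_ext_lin.
  - exact (filterdiff_comp' (fun v => sqdist v p) (fun w => phi a (sqrt w)) u _ _
             (filterdiff_sqdist p) (is_derive_phi_sqrt a _ Ha Hp)).
  - intros [v1 v2]. unfold scal; simpl; unfold mult; simpl. field.
Qed.

Lemma filterdiff_half_norm2 :
  filterdiff (fun v : R * R => (fst v ^ 2 + snd v ^ 2) / 2) (locally u)
    (fun v => fst u * fst v + snd u * snd v).
Proof.
  apply (filterdiff_ext (fun v : R * R => / 2 * (fst v ^ 2 + snd v ^ 2)));
    [intros v; simpl; field |].
  eapply filterdiff_ext_lin.
  - apply filterdiff_scal_R2, filterdiff_plus_R2;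
      apply filterdiff_sqr, filterdiff_linear; [apply is_linear_fst | apply is_linear_snd].
  - intros v. simpl. field.
Qed.

End Differential.

Lemma filterdiff_V a m u : 1 < a -> 0 < m -> in_domain u ->
  filterdiff (V a m) (locally u) (fun v => fst v * Vx a m u + snd v * Vy a m u).
Proof.
  intros Ha Hm Hu. rewrite in_domain_iff in Hu. destruct Hu as (H1 & H2 & H0).
  eapply filterdiff_ext_lin.
  - apply filterdiff_plus_R2; [apply filterdiff_plus_R2; [apply filterdiff_plus_R2 |] |].
    + apply filterdiff_half_norm2.
    + apply filterdiff_scal_R2, filterdiff_phi_dist; assumption.
    + apply filterdiff_scal_R2, filterdiff_phi_dist; assumption.
    + apply (filterdiff_ext (fun v => m / (s_const a + m) * phi a (dist2 v (0, 0))));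
        [reflexivity |].
      apply filterdiff_scal_R2, filterdiff_phi_dist; assumption.
  - intros [v1 v2]. unfold Vx, Vy, radial_factor, coef. cbn [fst snd].
    pose proof (Rpower_pos 2 (- a)). unfold s_const in *.
    match goal with |- ?l = ?r => change (@eq R l r) end. field. lra.
Qed.

Lemma filterdiff_zero_iff (f : R * R -> R) (u : R * R) (A B : R) :
  filterdiff f (locally u) (fun v => fst v * A + snd v * B) ->
  (filterdiff f (locally u) (fun _ => 0) <-> A = 0 /\ B = 0).
Proof.
  intros H. destruct u as [x y].
  assert (Hcurry : forall l, filterdiff f (locally (x, y)) l ->
            filterdiff (fun v : R * R => (fun a b => f (a, b)) (fst v) (snd v)) (locally (x, y)) l).
  { intros l Hl. apply (filterdiff_ext f); [intros [a b]; reflexivity | exact Hl]. }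
  split.
  - intros H0.
    assert (D1 : differentiable_pt_lim (fun a b => f (a, b)) x y A B)
      by (apply filterdiff_differentiable_pt_lim, Hcurry, H).
    assert (D2 : differentiable_pt_lim (fun a b => f (a, b)) x y 0 0).
    { apply filterdiff_differentiable_pt_lim, Hcurry.
      eapply filterdiff_ext_lin; [exact H0 | intros v; simpl; ring]. }
    apply differentiable_pt_lim_unique in D1, D2. destruct D1, D2. split; congruence.
  - intros [-> ->]. eapply filterdiff_ext_lin; [exact H | intros v; simpl; ring].
Qed.

Lemma critical_point_iff a m u : 1 < a -> 0 < m ->
  critical_point a m u <-> in_domain u /\ Vx a m u = 0 /\ Vy a m u = 0.
Proof.
  intros Ha Hm. unfold critical_point.
  split; intros [Hu H]; split; try exact Hu;
    eapply filterdiff_zero_iff; try apply filterdiff_V; assumption.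
Qed.

Definition opp2 (u : R * R) : R * R := (- fst u, - snd u).

Lemma sqdist_opp2_m1 u : sqdist (opp2 u) (-1, 0) = sqdist u (1, 0).
Proof. unfold sqdist, opp2. cbn [fst snd]. ring. Qed.

Lemma sqdist_opp2_1 u : sqdist (opp2 u) (1, 0) = sqdist u (-1, 0).
Proof. unfold sqdist, opp2. cbn [fst snd]. ring. Qed.

Lemma sqdist_opp2_0 u : sqdist (opp2 u) (0, 0) = sqdist u (0, 0).
Proof. unfold sqdist, opp2. cbn [fst snd]. ring. Qed.

Lemma dist2_opp2 u p : dist2 (opp2 u) (opp2 p) = dist2 u p.
Proof. unfold dist2, opp2. cbn [fst snd]. f_equal. ring. Qed.

Lemma in_domain_opp2 u : in_domain u -> in_domain (opp2 u).
Proof. rewrite !in_domain_iff, sqdist_opp2_m1, sqdist_opp2_1, sqdist_opp2_0. tauto. Qed.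

Lemma V_opp2 a m u : V a m (opp2 u) = V a m u.
Proof.
  unfold V, dist2.
  fold (sqdist (opp2 u) (-1, 0)) (sqdist (opp2 u) (1, 0)) (sqdist (opp2 u) (0, 0)).
  fold (sqdist u (-1, 0)) (sqdist u (1, 0)) (sqdist u (0, 0)).
  rewrite sqdist_opp2_m1, sqdist_opp2_1, sqdist_opp2_0.
  unfold opp2; cbn [fst snd]. unfold Rdiv. ring.
Qed.

Lemma radial_factor_opp2 a m u : radial_factor a m (opp2 u) = radial_factor a m u.
Proof.
  unfold radial_factor. rewrite sqdist_opp2_m1, sqdist_opp2_1, sqdist_opp2_0. ring.
Qed.

Lemma Vx_opp2 a m u : Vx a m (opp2 u) = - Vx a m u.
Proof.
  unfold Vx. rewrite radial_factor_opp2, sqdist_opp2_m1, sqdist_opp2_1.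
  unfold opp2; cbn [fst snd]. ring.
Qed.

Lemma Vy_opp2 a m u : Vy a m (opp2 u) = - Vy a m u.
Proof. unfold Vy. rewrite radial_factor_opp2. unfold opp2; cbn [fst snd]. ring. Qed.

Lemma critical_point_opp2 a m u : 1 < a -> 0 < m ->
  critical_point a m u -> critical_point a m (opp2 u).
Proof.
  intros Ha Hm. rewrite !critical_point_iff by assumption.
  intros (Hu & HX & HY). rewrite Vx_opp2, Vy_opp2, HX, HY.
  split; [apply in_domain_opp2, Hu | split; ring].
Qed.

Lemma saddle_point_opp2 a m u : 1 < a -> 0 < m ->
  saddle_point a m u -> saddle_point a m (opp2 u).
Proof.
  intros Ha Hm [Hc Hsaddle]. split; [apply critical_point_opp2; assumption |].
  intros eps Heps.
  destruct (Hsaddle eps Heps) as [[q1 (D1 & N1 & L1)] [q2 (D2 & N2 & L2)]].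
  split; [exists (opp2 q1) | exists (opp2 q2)];
    rewrite dist2_opp2, !V_opp2; auto using in_domain_opp2.
Qed.

Lemma opp2_real x : opp2 (x, 0) = (- x, 0).
Proof. unfold opp2. cbn [fst snd]. f_equal. ring. Qed.

Lemma opp2_imag y : opp2 (0, y) = (0, - y).
Proof. unfold opp2. cbn [fst snd]. f_equal. ring. Qed.

(* Off the real axis, [Vy = 0] kills the radial factor, and then [Vx = 0] balances the pulls
   of the two unit masses. *)
Lemma critical_off_real_axis a m u : 1 < a -> 0 < m ->
  in_domain u -> Vx a m u = 0 -> Vy a m u = 0 -> snd u <> 0 -> fst u = 0.
Proof.
  intros Ha Hm Hu HX HY Hy. rewrite in_domain_iff in Hu. destruct Hu as (H1 & H2 & _).
  assert (Hrad : radial_factor a m u = 0)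
    by (unfold Vy in HY; destruct (Rmult_integral _ _ HY); [contradiction | assumption]).
  unfold Vx in HX. rewrite Hrad in HX.
  assert (Hc := coef_pos a m Hm).
  assert (Hk : kappa a (sqdist u (-1, 0)) = kappa a (sqdist u (1, 0))) by nra.
  apply kappa_inj in Hk; [| assumption ..]. unfold sqdist in Hk. cbn [fst snd] in Hk. nra.
Qed.

(* Sum of the tangent inequalities of [psi] at [p]; the first-order terms add up to the
   gradient at [p]. *)
Lemma V_ge_critical a m p q : 1 < a -> 0 < m ->
  in_domain p -> Vx a m p = 0 -> Vy a m p = 0 -> in_domain q ->
  V a m p + radial_factor a m p / 2 * sqdist q p <= V a m q.
Proof.
  intros Ha Hm Hp HX HY Hq.
  rewrite (V_psi a m p), (V_psi a m q) by assumption.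
  rewrite in_domain_iff in Hp, Hq. destruct Hp as (P1 & P2 & P0), Hq as (Q1 & Q2 & Q0).
  assert (Hc := coef_pos a m Hm).
  pose proof (psi_tangent a _ _ Ha P1 Q1) as T1.
  pose proof (psi_tangent a _ _ Ha P2 Q2) as T2.
  pose proof (psi_tangent a _ _ Ha P0 Q0) as T0.
  apply (Rmult_le_compat_l (coef a m)) in T1, T2; [| lra | lra].
  apply (Rmult_le_compat_l (m * coef a m)) in T0; [| nra].
  assert (E : (fst q ^ 2 + snd q ^ 2) / 2 - (fst p ^ 2 + snd p ^ 2) / 2
    - coef a m * (1 / 2 * kappa a (sqdist p (-1, 0)) * (sqdist q (-1, 0) - sqdist p (-1, 0)))
    - coef a m * (1 / 2 * kappa a (sqdist p (1, 0)) * (sqdist q (1, 0) - sqdist p (1, 0)))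
    - m * coef a m * (1 / 2 * kappa a (sqdist p (0, 0)) * (sqdist q (0, 0) - sqdist p (0, 0)))
    = radial_factor a m p / 2 * sqdist q p + (fst q - fst p) * Vx a m p
      + (snd q - snd p) * Vy a m p)
    by (unfold Vx, Vy, radial_factor, sqdist; cbn [fst snd]; field).
  rewrite HX, HY in E. lra.
Qed.

(* [sg] is the sign of [x - 1]: [-1] on [(0, 1)] and [1] on [(1, +oo)]. *)
Definition axis_force (a m sg x : R) : R :=
  x - coef a m * (Rpower (x + 1) (- a) + sg * Rpower (sg * (x - 1)) (- a) + m * Rpower x (- a)).

Lemma Rabs_sub1_sign sg x : (sg = 1 \/ sg = -1) -> 0 < sg * (x - 1) -> Rabs (x - 1) = sg * (x - 1).
Proof.
  intros [-> | ->] Hx; [rewrite Rabs_pos_eq | rewrite Rabs_left]; lra.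
Qed.

Lemma dist2_real x p : dist2 (x, 0) (p, 0) = Rabs (x - p).
Proof.
  unfold dist2. cbn [fst snd]. rewrite <- sqrt_Rsqr_abs. f_equal. unfold Rsqr. ring.
Qed.

Lemma V_real a m sg x : (sg = 1 \/ sg = -1) -> 0 < x -> 0 < sg * (x - 1) ->
  V a m (x, 0) = x ^ 2 / 2 + coef a m * phi a (x + 1) + coef a m * phi a (sg * (x - 1))
    + m * coef a m * phi a x.
Proof.
  intros Hsg Hx Hx1. unfold V. rewrite !dist2_real, (Rabs_sub1_sign sg x Hsg Hx1).
  rewrite (Rabs_pos_eq (x - -1)), (Rabs_pos_eq (x - 0)) by lra.
  replace (x - -1) with (x + 1) by ring. replace (x - 0) with x by ring.
  cbn [fst snd]. unfold coef, Rdiv. ring.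
Qed.

Lemma Vx_real a m sg x : (sg = 1 \/ sg = -1) -> 0 < x -> 0 < sg * (x - 1) ->
  Vx a m (x, 0) = axis_force a m sg x.
Proof.
  intros Hsg Hx Hx1. unfold Vx, radial_factor, axis_force, sqdist. cbn [fst snd].
  replace ((x - -1) ^ 2 + (0 - 0) ^ 2) with ((x + 1) ^ 2) by ring.
  replace ((x - 1) ^ 2 + (0 - 0) ^ 2) with ((sg * (x - 1)) ^ 2)
    by (destruct Hsg as [-> | ->]; ring).
  replace ((x - 0) ^ 2 + (0 - 0) ^ 2) with (x ^ 2) by ring.
  rewrite <- (kappa_sqr a (x + 1)), <- (kappa_sqr a (sg * (x - 1))), <- (kappa_sqr a x) by lra.
  destruct Hsg as [-> | ->]; ring.
Qed.

Lemma Vy_real a m x : Vy a m (x, 0) = 0.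
Proof. unfold Vy. cbn [snd]. ring. Qed.

Lemma axis_force_increasing a m sg x y : 1 < a -> 0 < m -> (sg = 1 \/ sg = -1) ->
  0 < x -> 0 < sg * (x - 1) -> 0 < sg * (y - 1) -> x < y ->
  axis_force a m sg x < axis_force a m sg y.
Proof.
  intros Ha Hm Hsg Hx Hx1 Hy1 Hxy. unfold axis_force.
  assert (Hc := coef_pos a m Hm).
  pose proof (Rpower_lt_base_neg (x + 1) (y + 1) (- a) ltac:(lra) ltac:(lra)) as L1.
  pose proof (Rpower_lt_base_neg x y (- a) ltac:(lra) ltac:(lra)) as L0.
  assert (L2 : sg * Rpower (sg * (y - 1)) (- a) < sg * Rpower (sg * (x - 1)) (- a)).
  { destruct Hsg as [-> | ->].
    - rewrite !Rmult_1_l in *. apply Rpower_lt_base_neg; lra.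
    - pose proof (Rpower_lt_base_neg (-1 * (y - 1)) (-1 * (x - 1)) (- a) ltac:(lra) ltac:(lra)).
      lra. }
  assert (0 < coef a m * ((Rpower (x + 1) (- a) - Rpower (y + 1) (- a))
                          + (sg * Rpower (sg * (x - 1)) (- a) - sg * Rpower (sg * (y - 1)) (- a))
                          + m * (Rpower x (- a) - Rpower y (- a)))).
  { apply Rmult_lt_0_compat; [exact Hc |]. nra. }
  lra.
Qed.

(* Along each side of the unit mass, [V] restricted to the real axis is the sum of [x^2/2] and
   convex functions of the (affine) distances to the masses. *)
Lemma V_real_ge a m sg r x : 1 < a -> 0 < m -> (sg = 1 \/ sg = -1) ->
  0 < r -> 0 < sg * (r - 1) -> 0 < x -> 0 < sg * (x - 1) ->
  V a m (r, 0) + (x - r) ^ 2 / 2 + (x - r) * axis_force a m sg r <= V a m (x, 0).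
Proof.
  intros Ha Hm Hsg Hr Hr1 Hx Hx1.
  rewrite (V_real a m sg r), (V_real a m sg x) by assumption.
  assert (Hc := coef_pos a m Hm).
  pose proof (phi_tangent a (r + 1) (x + 1) Ha ltac:(lra) ltac:(lra)) as T1.
  pose proof (phi_tangent a (sg * (r - 1)) (sg * (x - 1)) Ha Hr1 Hx1) as T2.
  pose proof (phi_tangent a r x Ha Hr Hx) as T0.
  apply (Rmult_le_compat_l (coef a m)) in T1, T2; [| lra | lra].
  apply (Rmult_le_compat_l (m * coef a m)) in T0; [| nra].
  unfold axis_force. unfold Rdiv. nra.
Qed.

Lemma increasing_root_unique (P : R -> Prop) (f : R -> R) r x :
  (forall y z, P y -> P z -> y < z -> f y < f z) ->
  P r -> f r = 0 -> P x -> f x = 0 -> x = r.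
Proof.
  intros Hf Pr Fr Px Fx. destruct (Rtotal_order x r) as [L | [L | L]]; [| exact L |].
  - pose proof (Hf x r Px Pr L). lra.
  - pose proof (Hf r x Pr Px L). lra.
Qed.

Lemma continuity_pt_of_ex_derive (f : R -> R) x : ex_derive f x -> continuity_pt f x.
Proof. intros H. apply continuity_pt_filterlim. exact (ex_derive_continuous f x H). Qed.

Lemma axis_force_continuous a m sg x : 0 < x -> 0 < sg * (x - 1) ->
  continuity_pt (axis_force a m sg) x.
Proof.
  intros Hx Hx1. apply continuity_pt_of_ex_derive.
  unfold axis_force, Rpower. auto_derive. repeat split; lra.
Qed.

(* Near [0] the pull [c m x^(-a) >= c m / x] of the central mass dominates. *)
Lemma inner_force_neg a m : 1 < a -> 0 < m ->
  exists x, 0 < x <= 1 / 4 /\ axis_force a m (-1) x < 0.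
Proof.
  intros Ha Hm. assert (Hc := coef_pos a m Hm). set (c := coef a m) in *.
  set (B := Rpower (1 / 2) (- a)). assert (HB : 0 < B) by apply Rpower_pos.
  set (x := Rmin (1 / 4) (c * m / (2 * (1 + c * B)))).
  assert (Hbound : 0 < c * m / (2 * (1 + c * B))) by (apply Rdiv_lt_0_compat; nra).
  assert (Hx : 0 < x <= 1 / 4) by (split; [apply Rmin_glb_lt | apply Rmin_l]; lra).
  assert (Hxm : x * (2 * (1 + c * B)) <= c * m) by (apply Rle_div_r; [nra | apply Rmin_r]).
  exists x. split; [exact Hx |]. unfold axis_force. fold c.
  replace (-1 * (x - 1)) with (1 - x) by ring.
  assert (H1 : 0 < c * Rpower (x + 1) (- a)) by (apply Rmult_lt_0_compat, Rpower_pos; exact Hc).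
  assert (H2 : c * Rpower (1 - x) (- a) <= c * B)
    by (apply Rmult_le_compat_l; [lra | apply Rpower_le_base_neg; lra]).
  assert (H3 : c * m * / x <= c * m * Rpower x (- a))
    by (apply Rmult_le_compat_l; [nra | apply inv_le_Rpower_neg; lra]).
  assert (H4 : 2 * (1 + c * B) <= c * m * / x).
  { apply (Rmult_le_reg_l x); [lra |].
    replace (x * (c * m * / x)) with (c * m) by (field; lra). lra. }
  nra.
Qed.

(* Near [1] the pull [c d^(-a) >= c / d] of the mass at [1], at distance [d], dominates. *)
Lemma inner_force_pos a m : 1 < a -> 0 < m ->
  exists x, 1 / 2 <= x < 1 /\ 0 < axis_force a m (-1) x.
Proof.
  intros Ha Hm. assert (Hc := coef_pos a m Hm). set (c := coef a m) in *.
  set (B := Rpower (1 / 2) (- a)). assert (HB : 0 < B) by apply Rpower_pos.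
  set (d := Rmin (1 / 2) (/ (1 + m * B))).
  assert (Hbound : 0 < / (1 + m * B)) by (apply Rinv_0_lt_compat; nra).
  assert (Hd : 0 < d <= 1 / 2) by (split; [apply Rmin_glb_lt | apply Rmin_l]; lra).
  assert (Hdm : 1 + m * B <= / d).
  { rewrite <- (Rinv_inv (1 + m * B)). apply Rinv_le_contravar; [lra | apply Rmin_r]. }
  exists (1 - d). split; [lra |]. unfold axis_force. fold c.
  replace (-1 * (1 - d - 1)) with d by ring.
  assert (H1 : c * Rpower (1 - d + 1) (- a) <= c)
    by (rewrite <- (Rmult_1_r c) at 2; apply Rmult_le_compat_l; [lra | apply Rpower_neg_le_1; lra]).
  assert (H2 : c * / d <= c * Rpower d (- a))
    by (apply Rmult_le_compat_l; [lra | apply inv_le_Rpower_neg; lra]).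
  assert (H3 : c * m * Rpower (1 - d) (- a) <= c * m * B)
    by (apply Rmult_le_compat_l; [nra | apply Rpower_le_base_neg; lra]).
  assert (H4 : c * (1 + m * B) <= c * / d) by (apply Rmult_le_compat_l; lra).
  nra.
Qed.

Lemma inner_root a m : 1 < a -> 0 < m -> exists r, 0 < r < 1 /\ axis_force a m (-1) r = 0.
Proof.
  intros Ha Hm.
  destruct (inner_force_neg a m Ha Hm) as [lo [Hlo Flo]].
  destruct (inner_force_pos a m Ha Hm) as [hi [Hhi Fhi]].
  destruct (Ranalysis5.IVT_interv (axis_force a m (-1)) lo hi) as [r [Hr Fr]];
    [intros x Hx; apply axis_force_continuous; lra | lra | exact Flo | exact Fhi |].
  exists r. split; [lra | exact Fr].
Qed.

Lemma outer_force_neg a m : 1 < a -> 0 < m ->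
  exists x, 1 < x <= 2 /\ axis_force a m 1 x < 0.
Proof.
  intros Ha Hm. assert (Hc := coef_pos a m Hm). set (c := coef a m) in *.
  set (d := Rmin 1 (c / 2)).
  assert (Hd : 0 < d <= 1) by (split; [apply Rmin_glb_lt | apply Rmin_l]; lra).
  assert (Hdc : d <= c / 2) by apply Rmin_r.
  exists (1 + d). split; [lra |]. unfold axis_force. fold c.
  replace (1 * (1 + d - 1)) with d by ring.
  assert (H1 : 0 < c * Rpower (1 + d + 1) (- a)) by (apply Rmult_lt_0_compat, Rpower_pos; exact Hc).
  assert (H2 : c * / d <= c * Rpower d (- a))
    by (apply Rmult_le_compat_l; [lra | apply inv_le_Rpower_neg; lra]).
  assert (H3 : 0 < c * m * Rpower (1 + d) (- a))
    by (apply Rmult_lt_0_compat; [nra | apply Rpower_pos]).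
  assert (H4 : 2 <= c * / d).
  { apply (Rmult_le_reg_l d); [lra |]. replace (d * (c * / d)) with c by (field; lra). lra. }
  nra.
Qed.

Lemma outer_force_pos a m : 1 < a -> 0 < m ->
  exists x, 2 < x /\ 0 < axis_force a m 1 x.
Proof.
  intros Ha Hm. assert (Hc := coef_pos a m Hm). set (c := coef a m) in *.
  assert (Hcm : 0 < c * (2 + m)) by (apply Rmult_lt_0_compat; lra).
  exists (2 + c * (2 + m)). split; [lra |]. unfold axis_force. fold c.
  set (x := 2 + c * (2 + m)).
  assert (H1 : Rpower (x + 1) (- a) <= 1) by (apply Rpower_neg_le_1; unfold x; lra).
  assert (H2 : Rpower (1 * (x - 1)) (- a) <= 1) by (apply Rpower_neg_le_1; unfold x; lra).
  assert (H0 : Rpower x (- a) <= 1) by (apply Rpower_neg_le_1; unfold x; lra).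
  assert (c * (Rpower (x + 1) (- a) + 1 * Rpower (1 * (x - 1)) (- a) + m * Rpower x (- a))
          <= c * (2 + m)) by (apply Rmult_le_compat_l; nra).
  unfold x at 1. lra.
Qed.

Lemma outer_root a m : 1 < a -> 0 < m -> exists r, 1 < r /\ axis_force a m 1 r = 0.
Proof.
  intros Ha Hm.
  destruct (outer_force_neg a m Ha Hm) as [lo [Hlo Flo]].
  destruct (outer_force_pos a m Ha Hm) as [hi [Hhi Fhi]].
  destruct (Ranalysis5.IVT_interv (axis_force a m 1) lo hi) as [r [Hr Fr]];
    [intros x Hx; apply axis_force_continuous; lra | lra | exact Flo | exact Fhi |].
  exists r. split; [lra | exact Fr].
Qed.

Definition imag_factor (a m y : R) : R :=
  1 - coef a m * (2 * kappa a (1 + y ^ 2) + m * kappa a (y ^ 2)).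

Lemma radial_factor_imag a m y : radial_factor a m (0, y) = imag_factor a m y.
Proof.
  unfold radial_factor, imag_factor, sqdist. cbn [fst snd].
  replace ((0 - -1) ^ 2 + (y - 0) ^ 2) with (1 + y ^ 2) by ring.
  replace ((0 - 1) ^ 2 + (y - 0) ^ 2) with (1 + y ^ 2) by ring.
  replace ((0 - 0) ^ 2 + (y - 0) ^ 2) with (y ^ 2) by ring. ring.
Qed.

Lemma radial_factor_imag_even a m y : radial_factor a m (0, - y) = radial_factor a m (0, y).
Proof.
  rewrite !radial_factor_imag. unfold imag_factor. now replace ((- y) ^ 2) with (y ^ 2) by ring.
Qed.

Lemma Vx_imag a m y : Vx a m (0, y) = 0.
Proof.
  unfold Vx, sqdist. cbn [fst snd].
  replace ((0 - -1) ^ 2 + (y - 0) ^ 2) with ((0 - 1) ^ 2 + (y - 0) ^ 2) by ring. ring.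
Qed.

Lemma imag_factor_increasing a m x y : 1 < a -> 0 < m -> 0 < x -> x < y ->
  imag_factor a m x < imag_factor a m y.
Proof.
  intros Ha Hm Hx Hxy. unfold imag_factor.
  assert (Hc := coef_pos a m Hm).
  pose proof (kappa_lt a (1 + x ^ 2) (1 + y ^ 2) Ha ltac:(nra)).
  pose proof (kappa_lt a (x ^ 2) (y ^ 2) Ha ltac:(nra)).
  assert (0 < coef a m * (2 * (kappa a (1 + x ^ 2) - kappa a (1 + y ^ 2))
                          + m * (kappa a (x ^ 2) - kappa a (y ^ 2))))
    by (apply Rmult_lt_0_compat; nra).
  lra.
Qed.

Lemma imag_factor_continuous a m y : 0 < y -> continuity_pt (imag_factor a m) y.
Proof.
  intros Hy. apply continuity_pt_of_ex_derive.
  unfold imag_factor, kappa, Rpower. auto_derive. repeat split; nra.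
Qed.

(* The only place where the value of [s_const a = 2^(-a)] matters: it is less than
   [2 kappa a 2 = 2^((1-a)/2)]. *)
Lemma imag_factor_1_neg a m : 1 < a -> 0 < m -> imag_factor a m 1 < 0.
Proof.
  intros Ha Hm. unfold imag_factor.
  replace (1 + 1 ^ 2) with 2 by ring. replace (1 ^ 2) with 1 by ring.
  replace (kappa a 1) with 1 by (unfold kappa, Rpower; rewrite ln_1, Rmult_0_r, exp_0; reflexivity).
  assert (E2 : 2 * kappa a 2 = Rpower 2 ((1 - a) / 2)).
  { unfold kappa. rewrite <- (Rpower_1 2) at 1 by lra. rewrite <- Rpower_plus. f_equal. field. }
  assert (Hs : s_const a < 2 * kappa a 2) by (rewrite E2; unfold s_const; apply Rpower_lt; lra).
  assert (Hs0 : 0 < s_const a) by apply Rpower_pos.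
  assert (1 < coef a m * (2 * kappa a 2 + m * 1)); [| lra].
  apply (Rmult_lt_reg_l (s_const a + m)); [lra |].
  unfold coef. rewrite <- Rmult_assoc, Rinv_r by lra. lra.
Qed.

Lemma imag_factor_pos a m : 1 < a -> 0 < m -> exists y, 1 < y /\ 0 < imag_factor a m y.
Proof.
  intros Ha Hm. assert (Hc := coef_pos a m Hm).
  assert (Hcm : 0 < coef a m * (2 + m)) by (apply Rmult_lt_0_compat; lra).
  set (y := 2 + coef a m * (2 + m)).
  exists y. split; [unfold y; lra |]. unfold imag_factor.
  assert (K1 : kappa a (1 + y ^ 2) <= / y)
    by (eapply Rle_trans; [apply kappa_le_inv | apply Rinv_le_contravar]; unfold y; nra).
  assert (K0 : kappa a (y ^ 2) <= / y)
    by (eapply Rle_trans; [apply kappa_le_inv | apply Rinv_le_contravar]; unfold y; nra).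
  assert (Hbound : coef a m * (2 + m) * / y < 1).
  { apply (Rmult_lt_reg_r y); [unfold y; lra |].
    rewrite Rmult_assoc, Rinv_l, Rmult_1_l, Rmult_1_r by (unfold y; lra). unfold y; lra. }
  assert (coef a m * (2 * kappa a (1 + y ^ 2) + m * kappa a (y ^ 2)) <= coef a m * (2 + m) * / y)
    by (rewrite Rmult_assoc; apply Rmult_le_compat_l; nra).
  lra.
Qed.

Lemma imag_root a m : 1 < a -> 0 < m -> exists r, 1 < r /\ radial_factor a m (0, r) = 0.
Proof.
  intros Ha Hm. pose proof (imag_factor_1_neg a m Ha Hm) as Flo.
  destruct (imag_factor_pos a m Ha Hm) as [hi [Hhi Fhi]].
  destruct (Ranalysis5.IVT_interv (imag_factor a m) 1 hi) as [r [Hr Fr]];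
    [intros x Hx; apply imag_factor_continuous; lra | lra | exact Flo | exact Fhi |].
  exists r. rewrite radial_factor_imag. split; [| exact Fr].
  destruct Hr as [[Hr1 | <-] _]; [exact Hr1 | lra].
Qed.

Lemma in_domain_real_side sg x : (sg = 1 \/ sg = -1) -> 0 < x -> 0 < sg * (x - 1) ->
  in_domain (x, 0).
Proof. intros [-> | ->] Hx Hx1; apply in_domain_real; lra. Qed.

Lemma critical_real a m sg r : 1 < a -> 0 < m -> (sg = 1 \/ sg = -1) ->
  0 < r -> 0 < sg * (r - 1) -> axis_force a m sg r = 0 -> critical_point a m (r, 0).
Proof.
  intros Ha Hm Hsg Hr Hr1 Hf. apply critical_point_iff; [assumption .. |].
  split; [apply (in_domain_real_side sg); assumption |].
  rewrite (Vx_real a m sg), Vy_real by assumption. split; [exact Hf | reflexivity].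
Qed.

Lemma critical_imag a m r : 1 < a -> 0 < m -> r <> 0 -> radial_factor a m (0, r) = 0 ->
  critical_point a m (0, r).
Proof.
  intros Ha Hm Hr Hrad. apply critical_point_iff; [assumption .. |].
  split; [apply in_domain_imag, Hr |]. unfold Vy. rewrite Vx_imag, Hrad. split; ring.
Qed.

Lemma critical_real_axis_cases a m r_in r_out x : 1 < a -> 0 < m ->
  0 < r_in < 1 -> axis_force a m (-1) r_in = 0 -> 1 < r_out -> axis_force a m 1 r_out = 0 ->
  0 < x -> x <> 1 -> Vx a m (x, 0) = 0 -> x = r_in \/ x = r_out.
Proof.
  intros Ha Hm Hin Fin Hout Fout Hx Hx1 HX.
  destruct (Rlt_le_dec x 1) as [Hlt | Hge].
  - left. rewrite (Vx_real a m (-1)) in HX by lra.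
    apply (increasing_root_unique (fun y => 0 < y /\ 0 < -1 * (y - 1)) (axis_force a m (-1)));
      [intros y z Py Pz; apply axis_force_increasing; tauto | split; lra | exact Fin
      | split; lra | exact HX].
  - right. assert (Hgt : 1 < x) by lra. rewrite (Vx_real a m 1) in HX by lra.
    apply (increasing_root_unique (fun y => 0 < y /\ 0 < 1 * (y - 1)) (axis_force a m 1));
      [intros y z Py Pz; apply axis_force_increasing; tauto | split; lra | exact Fout
      | split; lra | exact HX].
Qed.

Lemma critical_imag_axis_case a m r_im y : 1 < a -> 0 < m ->
  1 < r_im -> radial_factor a m (0, r_im) = 0 ->
  0 < y -> radial_factor a m (0, y) = 0 -> y = r_im.
Proof.
  intros Ha Hm Hr Fr Hy Fy.
  rewrite radial_factor_imag in Fr, Fy.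
  apply (increasing_root_unique (fun t => 0 < t) (imag_factor a m));
    [intros t z Pt Pz; apply imag_factor_increasing | lra | ..]; assumption.
Qed.

Lemma critical_point_classification a m r_in r_out r_im u : 1 < a -> 0 < m ->
  0 < r_in < 1 -> axis_force a m (-1) r_in = 0 ->
  1 < r_out -> axis_force a m 1 r_out = 0 ->
  1 < r_im -> radial_factor a m (0, r_im) = 0 ->
  critical_point a m u <->
    (u = (r_in, 0) \/ u = (- r_in, 0) \/ u = (r_out, 0) \/ u = (- r_out, 0)
     \/ u = (0, r_im) \/ u = (0, - r_im)).
Proof.
  intros Ha Hm Hin Fin Hout Fout Him Fim. split.
  - rewrite critical_point_iff by assumption. intros (Hu & HX & HY).
    destruct u as [x y]. destruct (Req_dec y 0) as [-> | Hy].
    + destruct Hu as (H0 & H1 & Hm1).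
      assert (Hx0 : x <> 0) by (intros ->; contradiction).
      assert (Hx1 : x <> 1) by (intros ->; contradiction).
      assert (Hxm1 : x <> -1) by (intros ->; contradiction).
      destruct (Rlt_le_dec 0 x) as [Hpos | Hneg].
      * destruct (critical_real_axis_cases a m r_in r_out x Ha Hm Hin Fin Hout Fout Hpos Hx1 HX)
          as [-> | ->]; tauto.
      * assert (HX' : Vx a m (- x, 0) = 0) by (rewrite <- opp2_real, Vx_opp2, HX; ring).
        destruct (critical_real_axis_cases a m r_in r_out (- x) Ha Hm Hin Fin Hout Fout
                    ltac:(lra) ltac:(lra) HX') as [E | E];
          [right; left | right; right; right; left]; f_equal; lra.
    + assert (Hx : x = 0) by exact (critical_off_real_axis a m (x, y) Ha Hm Hu HX HY Hy).
      subst x. unfold Vy in HY. cbn [snd] in HY.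
      destruct (Rmult_integral _ _ HY) as [| Hrad]; [contradiction |].
      right; right; right; right.
      destruct (Rlt_le_dec 0 y) as [Hpos | Hneg].
      * left. f_equal. exact (critical_imag_axis_case a m r_im y Ha Hm Him Fim Hpos Hrad).
      * right. f_equal.
        assert (Hy' : 0 < - y) by lra.
        rewrite <- radial_factor_imag_even in Hrad.
        pose proof (critical_imag_axis_case a m r_im (- y) Ha Hm Him Fim Hy' Hrad). lra.
  - assert (Hcrit_in : critical_point a m (r_in, 0))
      by (apply (critical_real a m (-1)); auto; lra).
    assert (Hcrit_out : critical_point a m (r_out, 0))
      by (apply (critical_real a m 1); auto; lra).
    assert (Hcrit_im : critical_point a m (0, r_im)) by (apply critical_imag; auto; lra).
    intros [-> | [-> | [-> | [-> | [-> | ->]]]]];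
      rewrite <- ?opp2_real, <- ?opp2_imag; try apply critical_point_opp2; assumption.
Qed.

Lemma sqdist_vertical r y p : sqdist (r, y) (p, 0) = sqdist (r, 0) (p, 0) + y ^ 2.
Proof. unfold sqdist. cbn [fst snd]. ring. Qed.

Lemma in_domain_vertical r y : in_domain (r, 0) -> in_domain (r, y).
Proof.
  rewrite !in_domain_iff, !(sqdist_vertical r y). pose proof (pow2_ge_0 y). intros (H1 & H2 & H0).
  split; [| split]; lra.
Qed.

Lemma dist2_vertical r y : 0 < y -> dist2 (r, y) (r, 0) = y.
Proof.
  intros Hy. unfold dist2. cbn [fst snd].
  replace ((r - r) ^ 2 + (y - 0) ^ 2) with (y ^ 2) by ring. apply sqrt_pow2. lra.
Qed.

(* Tangents of [psi] at the squared distances from [(r, y)] bound [V (r, 0)] from below. *)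
Lemma V_vertical_le a m r y : 1 < a -> 0 < m -> in_domain (r, 0) ->
  V a m (r, y) <= V a m (r, 0) + y ^ 2 / 2 * radial_factor a m (r, y).
Proof.
  intros Ha Hm Hd.
  rewrite (V_psi a m (r, y)), (V_psi a m (r, 0)) by (try apply in_domain_vertical; exact Hd).
  unfold radial_factor. rewrite !(sqdist_vertical r y). cbn [fst snd].
  rewrite in_domain_iff in Hd. destruct Hd as (H1 & H2 & H0).
  pose proof (pow2_ge_0 y) as Hy.
  assert (Hc := coef_pos a m Hm).
  pose proof (psi_tangent a (sqdist (r, 0) (-1, 0) + y ^ 2) _ Ha ltac:(lra) H1) as T1.
  pose proof (psi_tangent a (sqdist (r, 0) (1, 0) + y ^ 2) _ Ha ltac:(lra) H2) as T2.
  pose proof (psi_tangent a (sqdist (r, 0) (0, 0) + y ^ 2) _ Ha ltac:(lra) H0) as T0.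
  apply (Rmult_le_compat_l (coef a m)) in T1, T2; [| lra | lra].
  apply (Rmult_le_compat_l (m * coef a m)) in T0; [| apply Rmult_le_pos; lra].
  unfold Rdiv. lra.
Qed.

Lemma radial_factor_vertical_le a m r : 1 < a -> 0 < m -> in_domain (r, 0) ->
  exists C, 0 < C /\ forall y, radial_factor a m (r, y) <= radial_factor a m (r, 0) + y ^ 2 * C.
Proof.
  intros Ha Hm Hd. rewrite in_domain_iff in Hd. destruct Hd as (H1 & H2 & H0).
  assert (Hc := coef_pos a m Hm).
  set (D := fun w => (a + 1) / 2 * Rpower w (- (a + 3) / 2)).
  assert (HD : forall w, 0 < D w) by (intros w; apply Rmult_lt_0_compat; [lra | apply Rpower_pos]).
  exists (coef a m * (D (sqdist (r, 0) (-1, 0)) + D (sqdist (r, 0) (1, 0))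
                      + m * D (sqdist (r, 0) (0, 0)))).
  split.
  - pose proof (HD (sqdist (r, 0) (-1, 0))). pose proof (HD (sqdist (r, 0) (1, 0))).
    pose proof (HD (sqdist (r, 0) (0, 0))).
    apply Rmult_lt_0_compat; [exact Hc |].
    apply Rplus_lt_0_compat; [lra | apply Rmult_lt_0_compat; assumption].
  - intros y. unfold radial_factor. rewrite !(sqdist_vertical r y).
    pose proof (pow2_ge_0 y) as Hy.
    pose proof (kappa_tangent a _ (sqdist (r, 0) (-1, 0) + y ^ 2) Ha H1 ltac:(lra)) as T1.
    pose proof (kappa_tangent a _ (sqdist (r, 0) (1, 0) + y ^ 2) Ha H2 ltac:(lra)) as T2.
    pose proof (kappa_tangent a _ (sqdist (r, 0) (0, 0) + y ^ 2) Ha H0 ltac:(lra)) as T0.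
    fold (D (sqdist (r, 0) (-1, 0))) (D (sqdist (r, 0) (1, 0))) (D (sqdist (r, 0) (0, 0))) in *.
    apply (Rmult_le_compat_l (coef a m)) in T1, T2; [| lra | lra].
    apply (Rmult_le_compat_l (m * coef a m)) in T0; [| apply Rmult_le_pos; lra].
    lra.
Qed.

(* [Vx (r, 0) = 0] reads [r * radial_factor = c * (kappa (d_{-1}^2) - kappa (d_1^2))], which is
   negative because the mass at [-1] is the farther one. *)
Lemma radial_factor_real_neg a m r : 1 < a -> 0 < m -> 0 < r -> r <> 1 ->
  Vx a m (r, 0) = 0 -> radial_factor a m (r, 0) < 0.
Proof.
  intros Ha Hm Hr Hr1 HX.
  assert (HA2 : 0 < sqdist (r, 0) (1, 0)) by (apply sqdist_pos; intros E; injection E; lra).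
  assert (HA : sqdist (r, 0) (1, 0) < sqdist (r, 0) (-1, 0)) by (unfold sqdist; cbn [fst snd]; nra).
  pose proof (kappa_lt a _ _ Ha (conj HA2 HA)).
  assert (Hc := coef_pos a m Hm).
  unfold Vx in HX. cbn [fst] in HX. nra.
Qed.

Lemma V_decreases_vertically a m r : 1 < a -> 0 < m -> 0 < r -> r <> 1 -> Vx a m (r, 0) = 0 ->
  forall eps, 0 < eps -> exists y, 0 < y < eps /\ V a m (r, y) < V a m (r, 0).
Proof.
  intros Ha Hm Hr Hr1 HX eps Heps.
  assert (Hd : in_domain (r, 0)) by (apply in_domain_real; lra).
  pose proof (radial_factor_real_neg a m r Ha Hm Hr Hr1 HX) as Hneg.
  destruct (radial_factor_vertical_le a m r Ha Hm Hd) as [C [HC Hbound]].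
  set (L := radial_factor a m (r, 0)) in *.
  set (y := Rmin (Rmin (eps / 2) 1) (- L / (2 * C))).
  assert (Hy : 0 < y) by (repeat apply Rmin_glb_lt; try apply Rdiv_lt_0_compat; lra).
  assert (Hy1 : y <= Rmin (eps / 2) 1) by apply Rmin_l.
  assert (Hye : y <= eps / 2) by (eapply Rle_trans; [exact Hy1 | apply Rmin_l]).
  assert (Hy1' : y <= 1) by (eapply Rle_trans; [exact Hy1 | apply Rmin_r]).
  assert (HyC : y * (2 * C) <= - L) by (apply Rle_div_r; [lra | apply Rmin_r]).
  exists y. split; [lra |].
  pose proof (Hbound y) as Hrad. pose proof (V_vertical_le a m r y Ha Hm Hd) as HV.
  assert (Hrad_neg : radial_factor a m (r, y) < 0) by nra.
  assert (0 < y ^ 2) by nra.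
  nra.
Qed.

Lemma saddle_point_real a m sg r : 1 < a -> 0 < m -> (sg = 1 \/ sg = -1) ->
  0 < r -> 0 < sg * (r - 1) -> axis_force a m sg r = 0 -> saddle_point a m (r, 0).
Proof.
  intros Ha Hm Hsg Hr Hr1 Hf.
  assert (Hd : in_domain (r, 0)) by (apply (in_domain_real_side sg); assumption).
  split; [apply (critical_real a m sg); assumption |].
  intros eps Heps. split.
  - assert (Hne1 : r <> 1) by (intros ->; lra).
    assert (HX : Vx a m (r, 0) = 0) by (rewrite (Vx_real a m sg); assumption).
    destruct (V_decreases_vertically a m r Ha Hm Hr Hne1 HX eps Heps) as [y [Hy HV]].
    exists (r, y). rewrite dist2_vertical by lra.
    split; [apply in_domain_vertical, Hd | split; [lra | exact HV]].
  - set (d := Rmin eps r / 2).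
    assert (Hd0 : 0 < d) by (unfold d; pose proof (Rmin_glb_lt eps r 0 Heps Hr); lra).
    assert (Hde : d < eps) by (unfold d; pose proof (Rmin_l eps r); lra).
    assert (Hdr : d < r) by (unfold d; pose proof (Rmin_r eps r); lra).
    set (x := r + sg * d).
    assert (Hx : 0 < x /\ 0 < sg * (x - 1)) by (unfold x; destruct Hsg as [-> | ->]; split; lra).
    assert (Hxr : Rabs (x - r) = d)
      by (unfold x; destruct Hsg as [-> | ->]; [rewrite Rabs_pos_eq | rewrite Rabs_left]; lra).
    exists (x, 0). rewrite dist2_real, Hxr.
    split; [apply (in_domain_real_side sg); tauto | split; [exact Hde |]].
    pose proof (V_real_ge a m sg r x Ha Hm Hsg Hr Hr1 (proj1 Hx) (proj2 Hx)) as HV.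
    rewrite Hf in HV.
    assert (0 < (x - r) ^ 2) by (rewrite <- pow2_abs, Hxr; nra).
    lra.
Qed.

Lemma local_min_point_of_flat_critical a m p : 1 < a -> 0 < m ->
  critical_point a m p -> radial_factor a m p = 0 -> local_min_point a m p.
Proof.
  intros Ha Hm Hp Hflat. rewrite critical_point_iff in Hp by assumption.
  destruct Hp as (Hd & HX & HY).
  exists 1. split; [lra |]. intros q Hq _.
  pose proof (V_ge_critical a m p q Ha Hm Hd HX HY Hq) as H. rewrite Hflat in H. lra.
Qed.

Theorem mainTheorem11 (alpha mu : R) (Halpha : 1 < alpha < 3) (Hmu : 0 < mu) :
  exists r1 r2 r3 : R,
    0 < r2 < 1 /\ 1 < r1 /\ 1 < r3 /\
    (forall u : R * R, critical_point alpha mu u <->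
       (u = (r2, 0) \/ u = (- r2, 0) \/ u = (r1, 0) \/ u = (- r1, 0)
        \/ u = (0, r3) \/ u = (0, - r3))) /\
    saddle_point alpha mu (r2, 0) /\ saddle_point alpha mu (- r2, 0) /\
    saddle_point alpha mu (r1, 0) /\ saddle_point alpha mu (- r1, 0) /\
    critical_point alpha mu (0, r3) /\ local_min_point alpha mu (0, r3) /\
    critical_point alpha mu (0, - r3) /\ local_min_point alpha mu (0, - r3).
Proof.
  assert (Ha : 1 < alpha) by lra.
  destruct (inner_root alpha mu Ha Hmu) as [r2 [Hr2 F2]].
  destruct (outer_root alpha mu Ha Hmu) as [r1 [Hr1 F1]].
  destruct (imag_root alpha mu Ha Hmu) as [r3 [Hr3 G3]].
  pose proof (fun u => critical_point_classification alpha mu r2 r1 r3 u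
                         Ha Hmu Hr2 F2 Hr1 F1 Hr3 G3) as Hclass.
  assert (S2 : saddle_point alpha mu (r2, 0))
    by (apply (saddle_point_real alpha mu (-1)); auto; lra).
  assert (S1 : saddle_point alpha mu (r1, 0))
    by (apply (saddle_point_real alpha mu 1); auto; lra).
  assert (S2' : saddle_point alpha mu (- r2, 0))
    by (rewrite <- opp2_real; apply saddle_point_opp2; assumption).
  assert (S1' : saddle_point alpha mu (- r1, 0))
    by (rewrite <- opp2_real; apply saddle_point_opp2; assumption).
  assert (C3 : critical_point alpha mu (0, r3)) by (apply Hclass; tauto).
  assert (C3' : critical_point alpha mu (0, - r3)) by (apply Hclass; tauto).
  assert (M3 : local_min_point alpha mu (0, r3))
    by (apply local_min_point_of_flat_critical; assumption).
  assert (M3' : local_min_point alpha mu (0, - r3))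
    by (apply local_min_point_of_flat_critical; [.. | rewrite radial_factor_imag_even]; assumption).
  exists r1, r2, r3.
  exact (conj Hr2 (conj Hr1 (conj Hr3 (conj Hclass (conj S2 (conj S2' (conj S1 (conj S1'
           (conj C3 (conj M3 (conj C3' M3'))))))))))).
Qed.
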